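(* Let $n\in\mathbb{N}$, $a_1,\dots,a_n\in\mathbb{N}$, and $s_0,t_0\in\mathbb{N}$ with $s_0<t_0$ and $\gcd(s_0,t_0)=1$; put $w_0=\frac{s_0}{t_0}$. Then there are unique $w_1,\dots,w_n\in\mathbb{Q}\cap(0,1)$ with $a_jw_j+w_{j-1}=1$ for $j=1,\dots,n$. Write $w_j=\frac{s_j}{t_j}$ with $s_j,t_j\in\mathbb{N}$, $\gcd(s_j,t_j)=1$, and let $\beta_j=\gcd(t_{j-1}-s_{j-1},a_j)$ and $\alpha_j=a_j/\beta_j$ for $j=1,\dots,n$. Then for $j=1,\dots,n$ $$s_j=\frac{\rho(a_{j-1},\dots,a_1)\cdot t_0+(-1)^js_0}{\beta_j\cdots\beta_1},\qquad t_j=\alpha_jt_{j-1}=\alpha_j\cdots\alpha_1\cdot t_0,$$ and $$\prod_{j=1}^n\left(\frac1{s_j}\Lambda_{t_j}-\Lambda_1\right)=(-1)^n\Lambda_1+\sum_{j=1}^n(-1)^{n-j}\frac{\beta_j\cdots\beta_1}{t_0-s_0}\Lambda_{t_j}=(-1)^nE_1+\sum_{j=1}^n(-1)^{n-j}\frac{a_j\cdots a_1}{1-w_0}E_{t_j},$$ $$\prod_{j=1}^n\left(\frac1{w_j}-1\right)=\frac{\rho(a_n,a_{n-1},\dots,a_1)+(-1)^{n-1}w_0}{1-w_0}.$$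
   Context: $\rho(x_1,\dots,x_k)=x_1\cdots x_k-x_2\cdots x_k+\dots+(-1)^{k-1}x_k+(-1)^k$, with $\rho(\emptyset)=1$. $S^{UR}$ is the set of roots of unity and $\mathbb{Q}\langle S^{UR}\rangle$ its group ring over $\mathbb{Q}$ (elements $\sum b_j\langle\zeta_j\rangle$, product $\langle\zeta_1\rangle\langle\zeta_2\rangle=\langle\zeta_1\zeta_2\rangle$). $\Lambda_m=\sum_{a=0}^{m-1}\langle e^{2\pi i a/m}\rangle$ and $E_m=\frac1m\Lambda_m$. *)

From mathcomp Require Import all_boot all_order all_algebra.
Set Implicit Arguments. Unset Strict Implicit. Unset Printing Implicit Defensive.
Import Order.TTheory GRing.Theory Num.Theory.
Local Open Scope ring_scope.

(* rho(x_1,...,x_k) = x_1...x_k - x_2...x_k + ... + (-1)^(k-1) x_k + (-1)^k,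
   i.e. sum_{i=0}^{k} (-1)^i * x_{i+1}...x_k  (0-based: prod of s`_l, i <= l < k).
   rho [::] = 1. *)
Definition rho (s : seq rat) : rat :=
  \sum_(i < (size s).+1) (-1) ^+ i * \prod_(i <= l < size s) s`_l.

(* ---- The group ring Q<S^UR> ----
   A root of unity e^{2 pi i q} (q in Q) is represented by the rational q,
   two rationals denoting the same root iff they differ by an integer
   (S^UR is isomorphic to Q/Z via q mod 1 |-> e^{2 pi i q}).
   An element sum_j b_j <zeta_j> is represented by a finite list of pairs
   (b_j, q_j), with zeta_j = e^{2 pi i q_j}; the element it denotes is its
   coefficient function [gcoef x], and two lists denote the same group-ring
   element iff their coefficient functions agree ([geq]). *)
Definition gr := seq (rat * rat).

Definition gcoef (x : gr) (z : rat) : rat :=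
  \sum_(p <- x | (p.2 - z) \is a Num.int) p.1.

Definition gr_eq (x y : gr) : Prop := forall z : rat, gcoef x z = gcoef y z.

Definition gadd (x y : gr) : gr := x ++ y.
Definition gscale (c : rat) (x : gr) : gr := [seq (c * p.1, p.2) | p <- x].
Definition gsub (x y : gr) : gr := gadd x (gscale (-1) y).
Definition gmul (x y : gr) : gr := [seq (p.1 * q.1, p.2 + q.2) | p <- x, q <- y].
Definition gone : gr := [:: (1, 0)].
Definition gzero : gr := [::].
Definition gprod (xs : seq gr) : gr := foldr gmul gone xs.
Definition gsum (xs : seq gr) : gr := foldr gadd gzero xs.

Definition Lambda (m : nat) : gr := [seq (1, a%:R / m%:R) | a <- iota 0 m].
Definition Egr (m : nat) : gr := gscale (m%:R)^-1 (Lambda m).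

From mathcomp Require Import all_boot all_order all_algebra ring lra.
Import Order.TTheory GRing.Theory Num.Theory.
Set Implicit Arguments. Unset Strict Implicit. Unset Printing Implicit Defensive.
Local Open Scope ring_scope.

(* Since t_{j-1} - s_{j-1} is coprime to t_{j-1}, passing from w_{j-1} to
   w_j = (t_{j-1} - s_{j-1}) / (a_j t_{j-1}) cancels exactly
   beta_j = gcd(t_{j-1} - s_{j-1}, a_j); hence t_j = alpha_j t_{j-1} and
   beta_1...beta_j t_j = a_1...a_j t_0.  The recurrence telescopes to
   a_1...a_m (1 - w_m) = rho(a_m,...,a_1) - (-1)^m w_0, which gives s_j and the
   product of the 1/w_j - 1.  In the group ring Lambda_m Lambda_T = m Lambda_T
   whenever m | T, and t_1 | t_2 | ..., so each partial product is a combination of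
   Lambda_1, Lambda_{t_1}, ...; multiplying by the next factor only creates the
   coefficient of the new Lambda_{t_{m+1}}, which is the same alternating sum
   sum_j (-1)^(m-j) beta_1...beta_j t_j = s_{m+1} beta_1...beta_{m+1} - (-1)^m (t_0 - s_0). *)

Lemma gcoef_gadd x y z : gcoef (gadd x y) z = gcoef x z + gcoef y z.
Proof. by rewrite /gcoef big_cat. Qed.

Lemma gcoef_gscale c x z : gcoef (gscale c x) z = c * gcoef x z.
Proof. by rewrite /gcoef big_map mulr_sumr. Qed.

Lemma gcoef_gsum xs z : gcoef (gsum xs) z = \sum_(x <- xs) gcoef x z.
Proof.
elim: xs => [|x xs IH]; first by rewrite big_nil /gcoef big_nil.
by rewrite big_cons gcoef_gadd IH.
Qed.

Lemma gcoef_gmull x y z :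
  gcoef (gmul x y) z = \sum_(p <- x) p.1 * gcoef y (z - p.2).
Proof.
rewrite /gcoef /gmul big_mkcond big_allpairs_dep /=.
apply: eq_bigr => p _; rewrite mulr_sumr [RHS]big_mkcond /=.
apply: eq_bigr => q _.
by rewrite opprB addrA [_ + q.2]addrC; case: ifP; rewrite ?mulr0.
Qed.

Lemma gcoef_gmulr x y z :
  gcoef (gmul x y) z = \sum_(q <- y) q.1 * gcoef x (z - q.2).
Proof.
rewrite /gcoef /gmul big_mkcond big_allpairs_dep /= exchange_big /=.
apply: eq_bigr => q _; rewrite mulr_sumr [RHS]big_mkcond /=.
apply: eq_bigr => p _.
by rewrite opprB addrA; case: ifP; rewrite ?mulr0 // mulrC.
Qed.

Lemma gcoef_gmulDr x y y' z :
  gcoef (gmul x (gadd y y')) z = gcoef (gmul x y) z + gcoef (gmul x y') z.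
Proof. by rewrite !gcoef_gmulr big_cat. Qed.

Lemma gcoef_gmulZr x c y z :
  gcoef (gmul x (gscale c y)) z = c * gcoef (gmul x y) z.
Proof.
rewrite !gcoef_gmulr big_map mulr_sumr.
by apply: eq_bigr => q _; rewrite mulrA.
Qed.

Lemma gcoef_gmulBr x y y' z :
  gcoef (gmul x (gsub y y')) z = gcoef (gmul x y) z - gcoef (gmul x y') z.
Proof. by rewrite gcoef_gmulDr gcoef_gmulZr mulN1r. Qed.

Lemma gcoef_gprod_rcons xs x z :
  gcoef (gprod (rcons xs x)) z = gcoef (gmul (gprod xs) x) z.
Proof.
elim: xs z => [|y xs IH] z /=; rewrite gcoef_gmull gcoef_gmulr //.
under eq_bigr do rewrite IH gcoef_gmulr mulr_sumr.
under [RHS]eq_bigr do rewrite gcoef_gmull mulr_sumr.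
rewrite exchange_big; apply: eq_bigr => q _; apply: eq_bigr => p _.
by rewrite mulrCA -!addrA [- _ - _]addrC.
Qed.

Lemma gcoef_Lambda k z :
  gcoef (Lambda k) z = \sum_(0 <= b < k) ((b%:R / k%:R - z) \is a Num.int)%:R.
Proof.
rewrite /gcoef /Lambda big_map big_mkcond /index_iota subn0.
by apply: eq_bigr => b _ /=; case: ifP.
Qed.

Lemma gcoef_Lambda_shift k b z : (0 < k)%N ->
  gcoef (Lambda k) (z - b%:R / k%:R) = gcoef (Lambda k) z.
Proof.
case: k => // k _.
have shift1 z' : gcoef (Lambda k.+1) (z' - 1 / k.+1%:R) = gcoef (Lambda k.+1) z'.
  rewrite !gcoef_Lambda [RHS]big_nat_recl // big_nat_recr //= addrC.
  congr (_ + _); last first.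
    by apply: eq_bigr => i _; rewrite -[i.+1%:R]natr1 mulrDl opprB addrA addrAC.
  have -> : k%:R / k.+1%:R - (z' - 1 / k.+1%:R) = 1 + (0 / k.+1%:R - z').
    by rewrite -natr1; field; rewrite natr1 pnatr_eq0.
  by rewrite rpredDl.
elim: b => [|b IH]; first by rewrite mul0r subr0.
by rewrite -[b.+1%:R]natr1 mulrDl opprD addrA shift1.
Qed.

Lemma sum_gcoef_Lambda_dvd m T z : (0 < m)%N -> (0 < T)%N -> (m %| T)%N ->
  \sum_(0 <= b < T) gcoef (Lambda m) (z - b%:R / T%:R) = m%:R * gcoef (Lambda T) z.
Proof.
move=> m_gt0 T_gt0 /dvdnP[c def_T].
have c_gt0 : (0 < c)%N by move: T_gt0; rewrite def_T muln_gt0 => /andP[].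
under eq_bigr do rewrite gcoef_Lambda.
rewrite exchange_big -[m in RHS]subn0 -sumr_const_nat mulr_suml.
apply: eq_bigr => i _; rewrite mul1r.
rewrite -(gcoef_Lambda_shift (i * c) z T_gt0) gcoef_Lambda.
apply: eq_bigr => b _.
have -> : (i * c)%:R / T%:R = i%:R / m%:R :> rat.
  by rewrite def_T !natrM; field; rewrite !pnatr_eq0 -!lt0n c_gt0 m_gt0.
by congr ((_ \is a _)%:R); ring.
Qed.

Lemma gcoef_gmul_Lambda x T z :
  gcoef (gmul x (Lambda T)) z = \sum_(0 <= b < T) gcoef x (z - b%:R / T%:R).
Proof.
rewrite gcoef_gmulr /Lambda big_map /index_iota subn0.
by apply: eq_bigr => b _; rewrite mul1r.
Qed.

Lemma gcoef_gmul_Lambda1 x z : gcoef (gmul x (Lambda 1)) z = gcoef x z.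
Proof. by rewrite gcoef_gmul_Lambda big_nat1 mul0r subr0. Qed.

Lemma gcoef_gmul_Lambda_comb x T c0 (r : seq nat) (c : nat -> rat) (m : nat -> nat) :
  (0 < T)%N -> (forall j, j \in r -> (0 < m j)%N && (m j %| T)%N) ->
  (forall z, gcoef x z = c0 * gcoef (Lambda 1) z + \sum_(j <- r) c j * gcoef (Lambda (m j)) z) ->
  forall z, gcoef (gmul x (Lambda T)) z
            = (c0 + \sum_(j <- r) c j * (m j)%:R) * gcoef (Lambda T) z.
Proof.
move=> T_gt0 m_dvd x_comb z.
rewrite gcoef_gmul_Lambda; under eq_bigr do rewrite x_comb.
rewrite big_split /= -mulr_sumr sum_gcoef_Lambda_dvd ?dvd1n // mul1r.
rewrite exchange_big mulrDl mulr_suml big_seq [in RHS]big_seq /=; congr (_ + _).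
apply: eq_bigr => j /m_dvd/andP[mj_gt0 mj_dvd].
by rewrite -mulr_sumr sum_gcoef_Lambda_dvd // mulrA.
Qed.

Lemma rho_nil : rho [::] = 1.
Proof. by rewrite /rho big_ord1 expr0 mul1r big_geq. Qed.

Lemma rho_cons x l : rho (x :: l) = x * \prod_(y <- l) y - rho l.
Proof.
rewrite [\prod_(y <- l) y](big_nth 0) /rho /= big_ord_recl /= expr0 mul1r big_nat_recl //.
congr (_ + _); rewrite -sumrN; apply: eq_bigr => i _.
by rewrite /bump /= add1n exprS mulN1r mulNr big_add1.
Qed.

Lemma sum_signr_subSn (R : ringType) (r : seq nat) m (F : nat -> R) :
  (forall j, j \in r -> (j <= m)%N) ->
  \sum_(j <- r) (-1) ^+ (m.+1 - j) * F j = - \sum_(j <- r) (-1) ^+ (m - j) * F j.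
Proof.
move=> le_rm; rewrite -sumrN big_seq [RHS]big_seq.
by apply: eq_bigr => j /le_rm le_jm; rewrite subSn // exprS mulN1r mulNr.
Qed.

Lemma iota1S m : iota 1 m.+1 = rcons (iota 1 m) m.+1.
Proof. by rewrite -cats1 -[m.+1]addn1 iotaD add1n addn1. Qed.

Lemma rho_rev_iota (f : nat -> rat) m :
  rho (rev [seq f i | i <- iota 1 m])
  = \sum_(0 <= j < m.+1) (-1) ^+ (m - j) * \prod_(1 <= i < j.+1) f i.
Proof.
elim: m => [|m IH]; first by rewrite rho_nil big_nat1 big_geq // mulr1.
rewrite iota1S map_rcons rev_rcons rho_cons IH big_rev big_map.
rewrite [RHS]big_nat_recr //= subnn mul1r addrC sum_signr_subSn; last first.
  by move=> j; rewrite mem_index_iota ltnS => /andP[].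
by congr (_ - _); rewrite big_nat_recr //= mulrC /index_iota subn1.
Qed.

Section Recurrence.
Variables (f x : nat -> rat) (n : nat).
Hypothesis x_rec : forall j, (1 <= j <= n)%N -> f j * x j + x j.-1 = 1.

Lemma onesub_prod_alt_sum m : (m <= n)%N ->
  \prod_(1 <= i < m.+1) f i * (1 - x m)
  = \sum_(0 <= j < m.+1) (-1) ^+ (m - j) * \prod_(1 <= i < j.+1) f i - (-1) ^+ m * x 0.
Proof.
elim: m => [|m IH] le_mn; first by rewrite big_nat1 !big_geq // expr0 !mul1r.
have step : f m.+1 * x m.+1 = 1 - x m by apply: (canRL (addrK (x m))); apply: x_rec.
rewrite big_nat_recr //= -mulrA.
have -> : f m.+1 * (1 - x m.+1) = f m.+1 - (1 - x m) by rewrite -step; ring.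
rewrite mulrBr (IH (ltnW le_mn)).
rewrite [in RHS]big_nat_recr //= subnn mul1r sum_signr_subSn; last first.
  by move=> j; rewrite mem_index_iota ltnS => /andP[].
by rewrite [\prod_(1 <= i < m.+2) _]big_nat_recr //= exprS; ring.
Qed.

Lemma prod_invr_subr1 m : (m <= n)%N -> (forall j, (1 <= j <= n)%N -> x j != 0) ->
  \prod_(1 <= j < m.+1) ((x j)^-1 - 1) * (1 - x 0) = \prod_(1 <= i < m.+1) f i * (1 - x m).
Proof.
move=> + x_neq0; elim: m => [|m IH] le_mn; first by rewrite !big_geq.
have step : f m.+1 * x m.+1 = 1 - x m by apply: (canRL (addrK (x m))); apply: x_rec.
rewrite big_nat_recr //= [in RHS]big_nat_recr //= mulrAC (IH (ltnW le_mn)) -step.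
by field; rewrite x_neq0 // le_mn.
Qed.

Lemma prod_invr_subr1_rho : (forall j, (1 <= j <= n)%N -> x j != 0) -> x 0 != 1 ->
  \prod_(1 <= j < n.+1) ((x j)^-1 - 1)
  = (rho (rev [seq f i | i <- iota 1 n]) + (-1) ^ (n%:Z - 1) * x 0) / (1 - x 0).
Proof.
move=> x_neq0 x0_neq1; have x0B_neq0 : 1 - x 0 != 0 by rewrite subr_eq0 eq_sym.
apply: (mulIf x0B_neq0); rewrite divfK // prod_invr_subr1 // onesub_prod_alt_sum //.
rewrite rho_rev_iota expfzDr ?oppr_eq0 ?oner_eq0 // -exprnP exprN1 invrN1.
by ring.
Qed.

End Recurrence.

Lemma recurrence_unique (f x y : nat -> rat) n :
  (forall j, (1 <= j <= n)%N -> f j != 0) -> x 0 = y 0 ->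
  (forall j, (1 <= j <= n)%N -> f j * x j + x j.-1 = 1) ->
  (forall j, (1 <= j <= n)%N -> f j * y j + y j.-1 = 1) ->
  forall j, (j <= n)%N -> x j = y j.
Proof.
move=> f_neq0 xy0 x_rec y_rec; elim=> [//|j IH] le_jn.
apply: (mulfI (f_neq0 j.+1 le_jn)); apply: (addIr (x j)).
by rewrite {2}(IH (ltnW le_jn)) x_rec // y_rec.
Qed.

Fixpoint wseq (a : nat -> nat) (w0 : rat) (j : nat) : rat :=
  if j is j'.+1 then (1 - wseq a w0 j') / (a j)%:R else w0.

Lemma wseq_rec a w0 j : (0 < j)%N -> (0 < a j)%N ->
  (a j)%:R * wseq a w0 j + wseq a w0 j.-1 = 1.
Proof.
case: j => // j _ a_gt0 /=.
by rewrite mulrC divfK ?subrK // pnatr_eq0 -lt0n.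
Qed.

Lemma wseq_in_unit a w0 n : (forall j, (1 <= j <= n)%N -> (0 < a j)%N) -> 0 < w0 < 1 ->
  forall j, (j <= n)%N -> 0 < wseq a w0 j < 1.
Proof.
move=> a_gt0 w0_in; elim=> [//|j IH] lt_jn /=.
have /andP[w_gt0 w_lt1] := IH (ltnW lt_jn).
have a_ge1 : 1 <= (a j.+1)%:R :> rat by rewrite ler1n a_gt0.
have a_gt0R := lt_le_trans ltr01 a_ge1.
by rewrite divr_gt0 ?subr_gt0 //= ltr_pdivrMr //; lra.
Qed.

Lemma frac_gt0_lt1 (s t : nat) : (0 < t)%N -> 0 < (s%:R / t%:R : rat) < 1 -> (0 < s < t)%N.
Proof.
move=> t_gt0; have tR_gt0 : 0 < t%:R :> rat by rewrite ltr0n.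
by rewrite pmulr_lgt0 ?invr_gt0 // ltr_pdivrMr // mul1r !ltr0n ltr_nat.
Qed.

Lemma frac_recurrence_nat (a s t s' t' : nat) : (0 < t)%N -> (0 < t')%N -> (s <= t)%N ->
  a%:R * (s'%:R / t'%:R) + s%:R / t%:R = 1 :> rat -> (a * s' * t = t' * (t - s))%N.
Proof.
move=> t_gt0 t'_gt0 le_st w_rec; apply/eqP; rewrite -(eqr_nat rat) !natrM natrB //.
have t'R_neq0 : t'%:R != 0 :> rat by rewrite pnatr_eq0 -lt0n.
have tR_neq0 : t%:R != 0 :> rat by rewrite pnatr_eq0 -lt0n.
have -> : a%:R * s'%:R * t%:R = t'%:R * t%:R * (a%:R * (s'%:R / t'%:R)) :> rat by field.
by apply/eqP; rewrite (canRL (addrK _) w_rec); field.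
Qed.

Lemma reduced_step (a s t s' t' : nat) :
  coprime s t -> (s < t)%N -> coprime s' t' -> (0 < s')%N ->
  (a * s' * t = t' * (t - s))%N ->
  (gcdn (t - s) a * s' = t - s)%N /\ t' = (a %/ gcdn (t - s) a * t)%N.
Proof.
move=> cop_st lt_st cop' s'_gt0 E.
set d := (t - s)%N in E *.
have /dvdnP[k def_d] : (s' %| d)%N.
  by rewrite -(Gauss_dvdr _ cop') -E dvdn_mulr // dvdn_mull.
have k_gt0 : (0 < k)%N.
  by move: lt_st; rewrite -subn_gt0 -/d def_d muln_gt0 => /andP[].
have E' : (a * t = t' * k)%N by apply/eqP; rewrite -(eqn_pmul2r s'_gt0) mulnAC E def_d mulnA.
have cop_dt : coprime d t.
  have def_t : t = (d + s)%N by rewrite subnK // ltnW.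
  by rewrite /coprime def_t gcdnDl gcdnC -(gcdnDr s d) -def_t.
have /dvdnP[al def_a] : (k %| a)%N.
  have cop_kt : coprime k t by apply: coprime_dvdl cop_dt; rewrite def_d dvdn_mulr.
  by rewrite -(Gauss_dvdl _ cop_kt) E' dvdn_mull.
have def_t' : t' = (al * t)%N.
  by apply/eqP; rewrite -(eqn_pmul2r k_gt0) -E' def_a mulnAC.
have cop_s'al : coprime s' al by apply: coprime_dvdr cop'; rewrite def_t' dvdn_mulr.
have -> : gcdn d a = k by rewrite def_d def_a [(k * _)%N]mulnC -muln_gcdl (eqP cop_s'al) mul1n.
by rewrite def_a mulnK // def_d mulnC.
Qed.

Section ReducedChain.
Variables (n : nat) (a s t : nat -> nat) (w : nat -> rat).
Hypothesis w_rec : forall j, (1 <= j <= n)%N -> (a j)%:R * w j + w j.-1 = 1.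
Hypothesis w_frac : forall j, (j <= n)%N ->
  [/\ coprime (s j) (t j), (0 < s j < t j)%N & w j = (s j)%:R / (t j)%:R].

Let beta j := gcdn (t j.-1 - s j.-1) (a j).
Let alpha j := (a j %/ beta j)%N.
Let B j := (\prod_(1 <= i < j.+1) beta i)%N.
Let P j := \prod_(1 <= i < j.+1) ((a i)%:R : rat).

Lemma t_gt0 j : (j <= n)%N -> (0 < t j)%N.
Proof. by case/w_frac=> _ /andP[s_gt0 /(ltn_trans s_gt0)]. Qed.

Lemma beta_alpha_step j : (1 <= j <= n)%N ->
  (beta j * s j = t j.-1 - s j.-1)%N /\ t j = (alpha j * t j.-1)%N.
Proof.
move=> /andP[j_gt0 le_jn]; have le_j1n := leq_trans (leq_pred j) le_jn.
have [cop1 /andP[_ lt1] w1] := w_frac le_j1n.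
have [cop /andP[s_gt0 _] wj] := w_frac le_jn.
apply: reduced_step => //; apply: frac_recurrence_nat.
- exact: t_gt0 le_j1n.
- exact: t_gt0 le_jn.
- exact: ltnW.
- by rewrite -w1 -wj w_rec // j_gt0.
Qed.

Lemma beta_gt0 j : (1 <= j <= n)%N -> (0 < beta j)%N.
Proof.
move=> /andP[_ le_jn]; have [_ /andP[_ lt1] _] := w_frac (leq_trans (leq_pred j) le_jn).
by rewrite gcdn_gt0 subn_gt0 lt1.
Qed.

Lemma B_gt0 j : (j <= n)%N -> (0 < B j)%N.
Proof.
move=> le_jn; rewrite /B big_nat_cond; apply: prodn_cond_gt0 => i /andP[/andP[i_gt0 lt_ij] _].
by rewrite beta_gt0 // i_gt0 (leq_trans _ le_jn).
Qed.

Lemma beta_mul_alpha j : (beta j * alpha j = a j)%N.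
Proof. by rewrite mulnC divnK // dvdn_gcdr. Qed.

Lemma t_prod_alpha j : (j <= n)%N -> t j = (\prod_(1 <= i < j.+1) alpha i * t 0)%N.
Proof.
elim: j => [|j IH] le_jn; first by rewrite big_geq // mul1n.
rewrite (beta_alpha_step (j := j.+1) le_jn).2 /= (IH (ltnW le_jn)) [in RHS]big_nat_recr //=.
by rewrite mulnCA mulnA.
Qed.

Lemma t_dvd j k : (j <= k <= n)%N -> (t j %| t k)%N.
Proof.
move=> /andP[le_jk le_kn].
rewrite (t_prod_alpha le_kn) (t_prod_alpha (leq_trans le_jk le_kn)).
rewrite (@big_cat_nat _ _ _ j.+1 1 k.+1) //=.
by rewrite mulnAC dvdn_mulr.
Qed.

Lemma t_mul_B j : (j <= n)%N -> (t j * B j)%:R = P j * (t 0)%:R.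
Proof.
move=> le_jn; rewrite (t_prod_alpha le_jn) mulnAC -big_split /= natrM natr_prod.
by congr (_ * _); apply: eq_bigr => i _; rewrite mulnC beta_mul_alpha.
Qed.

Lemma s_mul_B m : (m < n)%N -> (s m.+1 * B m.+1)%:R = (t 0)%:R * (P m * (1 - w m)).
Proof.
move=> lt_mn; have [_ _ w_m1] := w_frac lt_mn.
have tR_neq0 : (t m.+1)%:R != 0 :> rat by rewrite pnatr_eq0 -lt0n t_gt0.
have step : (a m.+1)%:R * w m.+1 = 1 - w m by apply: (canRL (addrK _)); apply: w_rec.
rewrite natrM (_ : (s m.+1)%:R = w m.+1 * (t m.+1)%:R); last by rewrite w_m1 divfK.
by rewrite -mulrA -natrM t_mul_B // /P big_nat_recr //= -step; ring.
Qed.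

Lemma s_closed_form j : (1 <= j <= n)%N ->
  (s j)%:R = (rho (rev [seq (a i)%:R | i <- iota 1 j.-1]) * (t 0)%:R
              + (-1) ^+ j * (s 0)%:R) / (B j)%:R.
Proof.
case: j => // m /= lt_mn.
have B_neq0 : (B m.+1)%:R != 0 :> rat by rewrite pnatr_eq0 -lt0n B_gt0.
have t0_neq0 : (t 0)%:R != 0 :> rat by rewrite pnatr_eq0 -lt0n t_gt0.
have [_ _ w0] := w_frac (leq0n n).
apply: (canRL (mulfK B_neq0)); rewrite -natrM s_mul_B // /P.
rewrite (onesub_prod_alt_sum w_rec (ltnW lt_mn)) rho_rev_iota w0.
by rewrite exprS; field.
Qed.

Lemma alt_sum_B_t m : (m < n)%N ->
  (-1) ^+ m * ((t 0)%:R - (s 0)%:R)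
  + \sum_(j <- iota 1 m) (-1) ^+ (m - j) * (B j)%:R * (t j)%:R
  = (s m.+1 * B m.+1)%:R :> rat.
Proof.
move=> lt_mn.
have sum_tB : \sum_(j <- iota 1 m) (-1) ^+ (m - j) * (B j)%:R * (t j)%:R
              = (t 0)%:R * \sum_(1 <= j < m.+1) (-1) ^+ (m - j) * P j.
  rewrite mulr_sumr /index_iota subn1 big_seq [RHS]big_seq; apply: eq_bigr => j.
  rewrite mem_iota add1n ltnS => /andP[_ le_jm].
  by rewrite -mulrA -natrM mulnC t_mul_B ?(leq_trans le_jm (ltnW lt_mn)) //; ring.
have t0_neq0 : (t 0)%:R != 0 :> rat by rewrite pnatr_eq0 -lt0n t_gt0.
have [_ _ w0] := w_frac (leq0n n).
rewrite sum_tB s_mul_B // /P (onesub_prod_alt_sum w_rec (ltnW lt_mn)) (@big_ltn _ _ _ 0 m.+1) //.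
by rewrite big_geq // w0 subn0; field.
Qed.

Lemma gcoef_prod_Lambda m : (m <= n)%N -> forall z,
  gcoef (gprod [seq gsub (gscale (s j)%:R^-1 (Lambda (t j))) (Lambda 1) | j <- iota 1 m]) z
  = (-1) ^+ m * gcoef (Lambda 1) z
    + \sum_(j <- iota 1 m) (-1) ^+ (m - j) * (B j)%:R / ((t 0)%:R - (s 0)%:R)
                           * gcoef (Lambda (t j)) z.
Proof.
have [_ /andP[_ lt_st0] _] := w_frac (leq0n n).
have D_neq0 : (t 0)%:R - (s 0)%:R != 0 :> rat by rewrite subr_eq0 eqr_nat gtn_eqF.
set D := (t 0)%:R - (s 0)%:R.
elim: m => [|m IH] lt_mn z.
  by rewrite big_nil addr0 expr0 mul1r /Lambda /= mul0r.
have [_ /andP[s_gt0 _] _] := w_frac lt_mn.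
have sR_neq0 : (s m.+1)%:R != 0 :> rat by rewrite pnatr_eq0 -lt0n.
rewrite iota1S map_rcons gcoef_gprod_rcons gcoef_gmulBr gcoef_gmulZr gcoef_gmul_Lambda1.
rewrite (gcoef_gmul_Lambda_comb _ _ (IH (ltnW lt_mn))); first last.
- move=> j; rewrite mem_iota add1n ltnS => /andP[j_gt0 le_jm].
  by rewrite t_gt0 ?t_dvd ?(leq_trans le_jm (ltnW lt_mn)) // leqW.
- exact: t_gt0.
rewrite (IH (ltnW lt_mn)) -cats1 big_cat /= big_seq1 subnn expr0 mul1r.
have flip : \sum_(j <- iota 1 m) (-1) ^+ (m.+1 - j) * (B j)%:R / D * gcoef (Lambda (t j)) z
            = - \sum_(j <- iota 1 m) (-1) ^+ (m - j) * (B j)%:R / D * gcoef (Lambda (t j)) z.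
  rewrite -sumrN big_seq [RHS]big_seq; apply: eq_bigr => j.
  by rewrite mem_iota add1n ltnS => /andP[_ le_jm]; rewrite subSn // exprS; ring.
have sum_coef : \sum_(j <- iota 1 m) (-1) ^+ (m - j) * (B j)%:R / D * (t j)%:R
                = ((s m.+1 * B m.+1)%:R - (-1) ^+ m * D) / D.
  rewrite -(alt_sum_B_t lt_mn) addrAC subrr add0r mulr_suml.
  by apply: eq_bigr => j _; rewrite mulrAC.
rewrite flip sum_coef natrM exprS; field.
by rewrite sR_neq0 D_neq0.
Qed.

Lemma prod_Lambda_eq :
  gr_eq (gprod [seq gsub (gscale (s j)%:R^-1 (Lambda (t j))) (Lambda 1) | j <- iota 1 n])
        (gadd (gscale ((-1) ^+ n) (Lambda 1))
              (gsum [seq gscale ((-1) ^+ (n - j) * (B j)%:R / ((t 0)%:R - (s 0)%:R))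
                                (Lambda (t j)) | j <- iota 1 n])).
Proof.
move=> z; rewrite gcoef_prod_Lambda // gcoef_gadd gcoef_gscale gcoef_gsum big_map.
by congr (_ + _); apply: eq_bigr => j _; rewrite gcoef_gscale.
Qed.

Lemma Lambda_Egr_eq :
  gr_eq (gadd (gscale ((-1) ^+ n) (Lambda 1))
              (gsum [seq gscale ((-1) ^+ (n - j) * (B j)%:R / ((t 0)%:R - (s 0)%:R))
                                (Lambda (t j)) | j <- iota 1 n]))
        (gadd (gscale ((-1) ^+ n) (Egr 1))
              (gsum [seq gscale ((-1) ^+ (n - j) * (\prod_(1 <= i < j.+1) a i)%N%:R
                                 / (1 - (s 0)%:R / (t 0)%:R)) (Egr (t j))
                    | j <- iota 1 n])).
Proof.
have [_ /andP[_ lt_st0] _] := w_frac (leq0n n).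
have t0_neq0 : (t 0)%:R != 0 :> rat by rewrite pnatr_eq0 -lt0n t_gt0.
have D_neq0 : (t 0)%:R - (s 0)%:R != 0 :> rat by rewrite subr_eq0 eqr_nat gtn_eqF.
move=> z; rewrite !gcoef_gadd !gcoef_gscale !gcoef_gsum !big_map /Egr.
congr (_ + _); rewrite big_seq [RHS]big_seq; apply: eq_bigr => j.
rewrite mem_iota add1n ltnS => /andP[_ le_jn].
have tj_neq0 : (t j)%:R != 0 :> rat by rewrite pnatr_eq0 -lt0n t_gt0.
have B_def : (B j)%:R = P j * (t 0)%:R / (t j)%:R.
  by rewrite -t_mul_B // natrM mulrAC divff // mul1r.
rewrite !gcoef_gscale mulrA natr_prod B_def; congr (_ * _).
by rewrite /P; field; rewrite tj_neq0 t0_neq0.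
Qed.

End ReducedChain.

Theorem lemma4p2 (n : nat) (a : nat -> nat) (s0 t0 : nat)
  (ha : forall j, (1 <= j <= n)%N -> (0 < a j)%N)
  (hs0 : (0 < s0)%N) (hst : (s0 < t0)%N) (hcop : coprime s0 t0) :
  let w0 : rat := s0%:R / t0%:R in
  let Wsol (w : nat -> rat) :=
    w 0%N = w0 /\
    (forall j, (1 <= j <= n)%N ->
       0 < w j < 1 /\ (a j)%:R * w j + w j.-1 = 1) in
  (exists w, Wsol w) /\
  (forall w w', Wsol w -> Wsol w' -> forall j, (j <= n)%N -> w j = w' j) /\
  (forall (w : nat -> rat) (s t : nat -> nat),
     Wsol w -> s 0%N = s0 -> t 0%N = t0 ->
     (forall j, (1 <= j <= n)%N ->
        coprime (s j) (t j) /\ (0 < t j)%N /\ w j = (s j)%:R / (t j)%:R) ->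
     let beta j := gcdn (t j.-1 - s j.-1)%N (a j) in
     let alpha j := (a j %/ beta j)%N in
     (forall j, (1 <= j <= n)%N ->
        (s j)%:R = (rho (rev [seq (a i)%:R | i <- iota 1 j.-1]) * t0%:R
                    + (-1) ^+ j * s0%:R) / (\prod_(1 <= i < j.+1) beta i)%N%:R
        /\ t j = (alpha j * t j.-1)%N
        /\ t j = (\prod_(1 <= i < j.+1) alpha i * t0)%N) /\
     gr_eq (gprod [seq gsub (gscale (s j)%:R^-1 (Lambda (t j))) (Lambda 1)
                | j <- iota 1 n])
         (gadd (gscale ((-1) ^+ n) (Lambda 1))
               (gsum [seq gscale ((-1) ^+ (n - j)
                         * (\prod_(1 <= i < j.+1) beta i)%N%:R
                         / (t0%:R - s0%:R)) (Lambda (t j))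
                     | j <- iota 1 n])) /\
     gr_eq (gadd (gscale ((-1) ^+ n) (Lambda 1))
               (gsum [seq gscale ((-1) ^+ (n - j)
                         * (\prod_(1 <= i < j.+1) beta i)%N%:R
                         / (t0%:R - s0%:R)) (Lambda (t j))
                     | j <- iota 1 n]))
         (gadd (gscale ((-1) ^+ n) (Egr 1))
               (gsum [seq gscale ((-1) ^+ (n - j)
                         * (\prod_(1 <= i < j.+1) a i)%N%:R
                         / (1 - w0)) (Egr (t j))
                     | j <- iota 1 n])) /\
     \prod_(1 <= j < n.+1) ((w j)^-1 - 1)
       = (rho (rev [seq (a i)%:R | i <- iota 1 n]) + (-1) ^ (n%:Z - 1) * w0)
         / (1 - w0)).
Proof.
move=> w0 Wsol.
have t0_gt0 := ltn_trans hs0 hst.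
have w0_in : 0 < w0 < 1 by rewrite /w0 divr_gt0 ?ltr0n //= ltr_pdivrMr ?ltr0n // mul1r ltr_nat.
have a_neq0 j : (1 <= j <= n)%N -> (a j)%:R != 0 :> rat.
  by move=> hj; rewrite pnatr_eq0 -lt0n ha.
split.
  exists (wseq a w0); split=> // j hj; have /andP[j_gt0 le_jn] := hj.
  by split; [exact: wseq_in_unit ha w0_in _ le_jn | exact: wseq_rec j_gt0 (ha _ hj)].
split.
  move=> x y [x0 x_rec] [y0 y_rec].
  by apply: (recurrence_unique a_neq0) => [|j /x_rec[]|j /y_rec[]] //; rewrite x0 y0.
move=> w s t [w_0 w_bnd] s_0 t_0 st_frac beta alpha; subst s0 t0.
have w_rec j : (1 <= j <= n)%N -> (a j)%:R * w j + w j.-1 = 1 by case/w_bnd.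
have w_frac j : (j <= n)%N ->
    [/\ coprime (s j) (t j), (0 < s j < t j)%N & w j = (s j)%:R / (t j)%:R].
  case: j => [_|j lt_jn]; first by rewrite hcop hs0 hst w_0.
  have [cop [t_gt0 wj]] := st_frac j.+1 lt_jn; have [w_in _] := w_bnd j.+1 lt_jn.
  by rewrite cop wj frac_gt0_lt1 // -wj.
split.
  move=> j hj; split; first exact (s_closed_form w_rec w_frac hj).
  split; first exact (beta_alpha_step w_rec w_frac hj).2.
  exact (t_prod_alpha w_rec w_frac (andP hj).2).
split; first exact (prod_Lambda_eq w_rec w_frac).
split; first exact (Lambda_Egr_eq w_rec w_frac).
rewrite -w_0; apply: (prod_invr_subr1_rho w_rec).
- by move=> j /w_bnd[/andP[w_gt0 _] _]; rewrite gt_eqF.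
- by rewrite w_0 lt_eqF //; case/andP: w0_in.
Qed.
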